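(* In every simple symmetric fractional hedonic game with $n$ agents, every sequence of IS deviations starting from the singleton partition has length $\mathcal O(n^2)$ (in particular it terminates). Moreover, there are simple symmetric fractional hedonic games with $n$ agents (for infinitely many $n$) admitting a sequence of IS deviations starting from the singleton partition of length $\Omega(n\sqrt n)$.
   Context: A fractional hedonic game (FHG) on agents $N$, $|N|=n$, is given by utility functions $v_i:N\to\mathbb R$ with $v_i(i)=0$; agent $i$'s utility for a coalition $C\ni i$ is $\frac{1}{|C|}\sum_{j\in C}v_i(j)$. It is simple if all $v_i(j)\in\{0,1\}$ and symmetric if $v_i(j)=v_j(i)$; a simple symmetric FHG is thus given by an undirected graph. The singleton partition is $\{\{i\}:i\in N\}$. An IS deviation of agent $i$ from partition $\pi$ to $\pi'$ is a move of $i$ alone from $\pi(i)$ into another coalition of $\pi$ or into a new singleton such that $i$ strictly prefers $\pi'(i)$ to $\pi(i)$ and every $j\in\pi'(i)\setminus\{i\}$ weakly prefers $\pi'(j)$ to $\pi(j)$. *)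

From mathcomp Require Import all_boot all_order all_algebra.
Set Implicit Arguments. Unset Strict Implicit. Unset Printing Implicit Defensive.
Import Order.TTheory GRing.Theory Num.Theory.

(* A simple symmetric fractional hedonic game on agents T is an undirected
   graph, given by a symmetric irreflexive relation e : rel T
   (v_i(j) = 1 iff e i j). *)
Definition simple_symmetric_game (T : finType) (e : rel T) : Prop :=
  symmetric e /\ irreflexive e.

Definition fhg_utility (T : finType) (e : rel T) (i : T) (C : {set T}) : rat :=
  (#|[set j in C | e i j]|%:R / #|C|%:R)%R.

Definition singleton_partition (T : finType) : {set {set T}} :=
  [set [set i] | i : T].

(* The partition obtained from P by moving i alone out of its coalition
   P(i) into the coalition C (C \in P, or C = set0 for a new singleton).
   The (possibly) empty rest of P(i) is removed. *)
Definition move (T : finType) (P : {set {set T}}) (i : T) (C : {set T})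
  : {set {set T}} :=
  ((P :\ pblock P i :\ C) :|: [set pblock P i :\ i; i |: C]) :\ set0.

Definition IS_deviation (T : finType) (e : rel T) (P : {set {set T}})
    (i : T) (C : {set T}) : Prop :=
  ((C \in P /\ i \notin C) \/ C = set0) /\
  (fhg_utility e i (pblock P i) < fhg_utility e i (i |: C))%R /\
  (forall j, j \in C -> (fhg_utility e j C <= fhg_utility e j (i |: C))%R).

Definition IS_step (T : finType) (e : rel T) (P P' : {set {set T}}) : Prop :=
  exists i C, IS_deviation e P i C /\ P' = move P i C.

Definition IS_sequence_from_singletons (T : finType) (e : rel T)
    (m : nat) (f : nat -> {set {set T}}) : Prop :=
  f 0 = singleton_partition T /\ (forall k, k < m -> IS_step e (f k) (f k.+1)).

From mathcomp Require Import all_boot all_order all_algebra.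
From mathcomp Require Import zify.
Set Implicit Arguments. Unset Strict Implicit. Unset Printing Implicit Defensive.
Import Order.TTheory GRing.Theory Num.Theory.

(* A partition is represented by a labelling [g : T -> nat] of the agents whose
   coalitions are the nonempty level sets.

   Upper bound: while every coalition is a clique of the graph, agent [i] can
   deviate from its coalition A only into a coalition B of neighbours of [i]
   (a non-neighbour y in B would lose utility unless B = {y}, and then [i] gains
   nothing), and only if |A| <= |B|.  So coalitions stay cliques and the sum of
   the squared coalition sizes grows by 2(|B| - |A|) + 2 >= 2 at each step; it
   starts at n and never exceeds n^2.

   Lower bound: on the complete graph, moving from a coalition of size a into
   another one of size b is an IS deviation iff a <= b.  Out of (k+1)^2
   singletons build coalitions of sizes 1, 2, ..., k+1 labelled 0, ..., k.
   Then for j = 0, ..., k-1 empty coalition j by j+1 cascades, each passing one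
   agent along j -> j+1 -> ... -> k, which is legal because the sizes strictly
   increase along the way.  This takes sum_j (j+1)(k-j) = k(k+1)(k+2)/6 moves. *)


Section Levels.

Variable T : finType.
Implicit Types (g : T -> nat) (i x y : T) (b c : nat) (X : {set T}).

Definition level g c : {set T} := [set x | g x == c].

Definition level_partition g : {set {set T}} := [set level g (g x) | x in T].

Definition relabel g i b : T -> nat := fun x => if x == i then b else g x.

Lemma in_level g c x : (x \in level g c) = (g x == c).
Proof. by rewrite inE. Qed.

Lemma level_neq g c c' x : g x = c -> c != c' -> level g c != level g c'.
Proof.
by move=> <- ne; apply/negP => /eqP/setP/(_ x); rewrite !in_level eqxx (negbTE ne).
Qed.

Lemma level_partitionP g X :
  reflect (X != set0 /\ exists c, X = level g c) (X \in level_partition g).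
Proof.
apply: (iffP imsetP) => [[x _ ->]|[/set0Pn[x xX] [c defX]]].
  by split; [apply/set0Pn; exists x; rewrite in_level | exists (g x)].
by exists x; move: xX; rewrite // defX in_level => /eqP->.
Qed.

Lemma pblock_level_partition g i : pblock (level_partition g) i = level g (g i).
Proof.
apply: def_pblock; last by rewrite in_level.
  apply/trivIsetP => _ _ /imsetP[x _ ->] /imsetP[y _ ->] /negP neq.
  apply/pred0P => z /=; rewrite !in_level.
  by apply/negP => /andP[/eqP gzx /eqP gzy]; apply: neq; rewrite -gzx gzy.
exact: imset_f.
Qed.

Lemma level_relabel g i b c :
  level (relabel g i b) c = if c == b then i |: level g c else level g c :\ i.
Proof.
apply/setP => x; rewrite /relabel.
case: eqVneq => [->|cb]; rewrite !inE; case: (eqVneq x i) => //= _.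
  exact: eqxx.
by rewrite eq_sym (negbTE cb).
Qed.

Lemma level_relabelD1 g i b c : level (relabel g i b) c :\ i = level g c :\ i.
Proof. by apply/setP => x; rewrite !inE /relabel; case: eqVneq. Qed.

Lemma move_level_partition g i b : b != g i ->
  move (level_partition g) i (level g b) = level_partition (relabel g i b).
Proof.
move=> bi; have iNb : i \notin level g b by rewrite in_level eq_sym.
have levelD1 c : c != g i -> level g c :\ i = level g c.
  by move=> ci; apply/setP => x; rewrite !inE; case: eqVneq => // ->; rewrite eq_sym (negbTE ci).
rewrite /move pblock_level_partition; apply/setP => X; rewrite !inE.
apply/idP/level_partitionP => [/andP[X0 XP]|[X0 [c defX]]].
  split=> //; case/or3P: XP => [/and3P[Xb Xi /level_partitionP[_ [c defX]]]|/eqP->|/eqP->].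
  - exists c; rewrite level_relabel ifN ?levelD1 //.
      by apply: contraNneq Xi => ci; rewrite defX ci.
    by apply: contraNneq Xb => cb; rewrite defX cb.
  - by exists (g i); rewrite level_relabel ifN // eq_sym.
  - by exists b; rewrite level_relabel eqxx.
subst X; rewrite X0 level_relabel; case: (eqVneq c b) => [->|cb]; first by rewrite eqxx !orbT.
case: (eqVneq c (g i)) => [->|ci]; first by rewrite eqxx orbT.
move: X0; rewrite level_relabel (negbTE cb) levelD1 // => /set0Pn[x]; rewrite in_level => /eqP xc.
rewrite !(level_neq xc) //=; apply/orP; left; apply/level_partitionP.
by split; [apply/set0Pn; exists x; rewrite in_level xc | exists c].
Qed.

(* Equals the sum of the squared coalition sizes of [level_partition g]. *)
Definition potential g : nat := \sum_x #|level g (g x)|.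

(* The last sum does not involve the label of [i]. *)
Lemma potential_split g i :
  potential g + 1 = 2 * #|level g (g i)| + \sum_(x | x != i) #|level g (g x) :\ i|.
Proof.
have card_level x : #|level g (g x)| = (g x == g i) + #|level g (g x) :\ i|.
  by rewrite (cardsD1 i) in_level eq_sym.
have same_level : \sum_(x | x != i) (g x == g i : nat) = #|level g (g i) :\ i|.
  rewrite (eq_bigr (fun x => if g x == g i then 1 else 0)) => [|x _]; last by case: eqP.
  by rewrite -big_mkcondr sum1dep_card; apply: eq_card => x; rewrite !inE.
rewrite /potential (bigD1 i) //= (eq_bigr _ (fun x _ => card_level x)) big_split /=.
rewrite same_level (cardsD1 i (level g (g i))) in_level eqxx; lia.
Qed.

Lemma potential_relabel g i b : b != g i ->
  potential (relabel g i b) + 2 * #|level g (g i)| = potential g + 2 * #|level g b| + 2.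
Proof.
move=> bi; have := potential_split g i; have := potential_split (relabel g i b) i.
have -> : relabel g i b i = b by rewrite /relabel eqxx.
have -> : \sum_(x | x != i) #|level (relabel g i b) (relabel g i b x) :\ i|
        = \sum_(x | x != i) #|level g (g x) :\ i|.
  by apply: eq_bigr => x xi; rewrite level_relabelD1 /relabel (negbTE xi).
rewrite level_relabel eqxx cardsU1 in_level eq_sym (negbTE bi); lia.
Qed.

Lemma potential_le g : potential g <= #|T| ^ 2.
Proof.
rewrite -mulnn -sum_nat_const.
by apply: leq_sum => x _; apply: max_card.
Qed.

Lemma level_inj g x : injective g -> level g (g x) = [set x].
Proof. by move=> g_inj; apply/setP => y; rewrite !inE (inj_eq g_inj). Qed.

Lemma level_partition_inj g : injective g -> level_partition g = singleton_partition T.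
Proof. by move=> g_inj; apply: eq_imset => x; rewrite level_inj. Qed.

Lemma potential_inj g : injective g -> potential g = #|T|.
Proof.
move=> g_inj; rewrite /potential -sum1_card.
by apply: eq_bigr => x _; rewrite level_inj // cards1.
Qed.

End Levels.

Lemma ltr_nat_ratio (R : numFieldType) (p q r s : nat) : 0 < q -> 0 < s ->
  (p%:R / q%:R < r%:R / s%:R :> R)%R = (p * s < r * q).
Proof.
move=> q_gt0 s_gt0; rewrite ltr_pdivrMr ?ltr0n // mulrAC ltr_pdivlMr ?ltr0n //.
by rewrite -!natrM ltr_nat.
Qed.

Lemma ler_nat_ratio (R : numFieldType) (p q r s : nat) : 0 < q -> 0 < s ->
  (p%:R / q%:R <= r%:R / s%:R :> R)%R = (p * s <= r * q).
Proof.
move=> q_gt0 s_gt0; rewrite ler_pdivrMr ?ltr0n // mulrAC ler_pdivlMr ?ltr0n //.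
by rewrite -!natrM ler_nat.
Qed.

Section CliqueDeviations.

Variables (T : finType) (e : rel T).
Implicit Types (g : T -> nat) (i x y : T) (b : nat) (C : {set T}).

Lemma fhg_utility_ge0 i C : (0 <= fhg_utility e i C)%R.
Proof. by rewrite divr_ge0 ?ler0n. Qed.

Lemma fhg_utility_setU1 y i C : i \notin C ->
  fhg_utility e y (i |: C) = ((e y i + #|[set z in C | e y z]|)%:R / #|C|.+1%:R)%R.
Proof.
move=> iNC; rewrite /fhg_utility cardsU1 iNC add1n; congr (_%:R / _)%R.
case eyi: (e y i).
  rewrite (_ : [set z in i |: C | e y z] = i |: [set z in C | e y z]).
    by rewrite cardsU1 inE (negbTE iNC).
  by apply/setP => z; rewrite !inE; case: (eqVneq z i) => [->|].
by apply: eq_card => z; rewrite !inE; case: (eqVneq z i) => [->|]; rewrite ?eyi ?andbF.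
Qed.

Definition clique_levels g := forall x y, g x = g y -> x != y -> e x y.

Hypothesis e_irr : irreflexive e.

Lemma card_clique_neighbours g x : clique_levels g ->
  #|[set y in level g (g x) | e x y]| = #|level g (g x)|.-1.
Proof.
move=> clique; rewrite (cardsD1 x (level g (g x))) in_level eqxx add1n /=.
apply: eq_card => y; rewrite !inE; case: (eqVneq y x) => [->|yx] /=; first by rewrite e_irr andbF.
by case: eqP => //= gyx; apply: clique; rewrite // eq_sym.
Qed.

Lemma fhg_utility_level g x : clique_levels g ->
  fhg_utility e x (level g (g x)) = (#|level g (g x)|.-1%:R / #|level g (g x)|%:R)%R.
Proof. by move=> clique; rewrite /fhg_utility card_clique_neighbours. Qed.

Lemma IS_deviation_target P i C : IS_deviation e P i C -> C \in P /\ i \notin C.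
Proof.
case=> [[//|->] [ui _]]; move: ui; rewrite fhg_utility_setU1 ?inE // e_irr.
have -> : #|[set z in set0 | e i z]| = 0 by apply: eq_card0 => z; rewrite !inE.
by rewrite mul0r ltNge fhg_utility_ge0.
Qed.

Lemma fhg_utility_join_adjacent i C : i \notin C -> {in C, forall y, e i y} ->
  fhg_utility e i (i |: C) = (#|C|%:R / #|C|.+1%:R)%R.
Proof.
move=> iNC adj; rewrite fhg_utility_setU1 // e_irr add0n; congr (_%:R / _)%R.
by apply: eq_card => z; rewrite inE; case: (boolP (z \in C)) => // /adj ->.
Qed.

Lemma clique_levels_inj g : injective g -> clique_levels g.
Proof. by move=> g_inj x y /g_inj ->; rewrite eqxx. Qed.

Hypothesis e_sym : symmetric e.

Lemma IS_deviation_clique_adjacent g i b : clique_levels g ->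
  IS_deviation e (level_partition g) i (level g b) -> {in level g b, forall y, e i y}.
Proof.
move=> clique dev y yb; have [_ iNb] := IS_deviation_target dev.
case: dev => _ [ui /(_ y yb) uj]; apply/negPn/negP => eNiy.
have gy : g y = b by apply/eqP; rewrite -in_level.
have b_gt0 : 0 < #|level g b| by apply/card_gt0P; exists y.
have b_le1 : #|level g b| <= 1.
  move: uj; rewrite fhg_utility_setU1 // (e_sym y i) (negbTE eNiy) add0n.
  by rewrite -gy fhg_utility_level // card_clique_neighbours // ler_nat_ratio ?gy //; nia.
have no_neighbour : #|[set z in level g b | e i z]| = 0.
  suff : #|[set z in level g b | e i z]| <= #|level g b :\ y|.
    by have := cardsD1 y (level g b); rewrite yb; lia.
  apply/subset_leq_card/subsetP => z; rewrite !inE => /andP[zb eiz].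
  by rewrite zb andbT; apply: contraTneq eiz => ->.
move: ui; rewrite fhg_utility_setU1 // e_irr no_neighbour mul0r.
by rewrite ltNge fhg_utility_ge0.
Qed.

Lemma IS_deviation_cliques g i C : clique_levels g -> IS_deviation e (level_partition g) i C ->
  exists b, [/\ C = level g b, b != g i, #|level g (g i)| <= #|level g b|
              & {in level g b, forall y, e i y}].
Proof.
move=> clique dev; have [/level_partitionP[_ [b defC]] iNC] := IS_deviation_target dev.
subst C; have adj := IS_deviation_clique_adjacent clique dev.
exists b; split=> //; first by rewrite in_level eq_sym in iNC.
have a_gt0 : 0 < #|level g (g i)| by apply/card_gt0P; exists i; rewrite in_level.
case: dev => _ [+ _]; rewrite pblock_level_partition fhg_utility_level //.
by rewrite fhg_utility_join_adjacent // ltr_nat_ratio //; nia.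
Qed.

Lemma clique_levels_relabel g i b : clique_levels g -> {in level g b, forall y, e i y} ->
  clique_levels (relabel g i b).
Proof.
move=> clique adj x y; rewrite /relabel.
case: (eqVneq x i) => [->|xi]; case: (eqVneq y i) => [->|yi] //=.
- by move=> /esym gy _; apply: adj; rewrite in_level gy.
- by move=> gx _; rewrite e_sym; apply: adj; rewrite in_level gx.
- exact: clique.
Qed.

Lemma IS_step_cliques g P : clique_levels g -> IS_step e (level_partition g) P ->
  exists g', [/\ P = level_partition g', clique_levels g' & potential g + 2 <= potential g'].
Proof.
move=> clique [i [C [dev ->]]].
have [b [-> bi sizes adj]] := IS_deviation_cliques clique dev.
exists (relabel g i b); split; first exact: move_level_partition.
  exact: clique_levels_relabel.
by have := potential_relabel bi; lia.
Qed.

End CliqueDeviations.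

Theorem IS_sequence_from_singletons_length (T : finType) (e : rel T) m f :
  simple_symmetric_game e -> IS_sequence_from_singletons e m f -> #|T| + 2 * m <= #|T| ^ 2.
Proof.
case=> e_sym e_irr [f0 steps].
pose rank (x : T) : nat := enum_rank x.
have rank_inj : injective rank by move=> x y /val_inj/enum_rank_inj.
have invariant k : k <= m -> exists g,
    [/\ f k = level_partition g, clique_levels e g & #|T| + 2 * k <= potential g].
  elim: k => [|k IH] km.
    exists rank; rewrite f0 level_partition_inj // potential_inj // addn0.
    by split=> //; exact: (@clique_levels_inj _ e _ rank_inj).
  have [g [fk clique pot]] := IH (ltnW km).
  have := steps k km; rewrite fk => /(IS_step_cliques e_irr e_sym clique)[g' [fk1 clique' pot']].
  by exists g'; split=> //; lia.
have [g [_ _ pot]] := invariant m (leqnn m).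
exact: leq_trans pot (potential_le g).
Qed.

Definition complete_graph (T : finType) : rel T := fun x y => x != y.
Arguments complete_graph T : clear implicits.

Lemma complete_graph_game (T : finType) : simple_symmetric_game (complete_graph T).
Proof. by split=> [x y|x]; rewrite /complete_graph ?eqxx // eq_sym. Qed.

Lemma IS_deviation_complete (T : finType) (g : T -> nat) i b : b != g i ->
  #|level g (g i)| <= #|level g b| ->
  IS_deviation (complete_graph T) (level_partition g) i (level g b).
Proof.
move=> bi sizes; have iNb : i \notin level g b by rewrite in_level eq_sym.
have clique : clique_levels (complete_graph T) g by [].
have irr : irreflexive (complete_graph T) by move=> x; rewrite /complete_graph eqxx.
have a_gt0 : 0 < #|level g (g i)| by apply/card_gt0P; exists i; rewrite in_level.
have b_gt0 : 0 < #|level g b| := leq_trans a_gt0 sizes.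
split; first by left; split=> //; apply/level_partitionP; split; [rewrite -card_gt0 | exists b].
split.
  rewrite pblock_level_partition fhg_utility_level // fhg_utility_join_adjacent //.
    by rewrite ltr_nat_ratio //; nia.
  by move=> y yb; apply: contraNneq iNb => ->.
move=> y yb; have gy : g y = b by apply/eqP; rewrite -in_level.
subst b; have yi : complete_graph T y i by apply: contraNneq iNb => <-.
rewrite fhg_utility_level // fhg_utility_setU1 // yi card_clique_neighbours //.
by rewrite ler_nat_ratio //; nia.
Qed.

Definition transfer (s : nat -> nat) a b r : nat -> nat :=
  fun x => if x == a then s x - r else if x == b then s x + r else s x.

Section Transfer.

Implicit Types (s : nat -> nat) (a b c x : nat).

Lemma transfer_src s a b r : transfer s a b r a = s a - r.
Proof. by rewrite /transfer eqxx. Qed.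

Lemma transfer_dst s a b r : a != b -> transfer s a b r b = s b + r.
Proof. by rewrite /transfer eqxx eq_sym => /negbTE->. Qed.

Lemma transfer_other s a b r x : x != a -> x != b -> transfer s a b r x = s x.
Proof. by rewrite /transfer => /negbTE-> /negbTE->. Qed.

Lemma transfer_ge s a b r x : x != a -> s x <= transfer s a b r x.
Proof. by rewrite /transfer => /negbTE->; case: ifP; rewrite ?leq_addr. Qed.

Lemma transfer_add s a b r r' : a != b ->
  transfer (transfer s a b r) a b r' =1 transfer s a b (r + r').
Proof.
move=> ab x; case: (eqVneq x a) => [->|xa]; first by rewrite !transfer_src subnDA.
case: (eqVneq x b) => [->|xb]; first by rewrite !transfer_dst // addnA.
by rewrite !transfer_other.
Qed.

Lemma transfer_chain s a b c : a != b -> b != c -> a != c ->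
  transfer (transfer s a b 1) b c 1 =1 transfer s a c 1.
Proof.
move=> ab bc ac x; case: (eqVneq x a) => [->|xa].
  by rewrite transfer_other ?transfer_src.
case: (eqVneq x b) => [->|xb].
  by rewrite transfer_src transfer_dst // addnK transfer_other // eq_sym.
case: (eqVneq x c) => [->|xc]; first by rewrite !transfer_dst // transfer_other 1?eq_sym.
by rewrite !transfer_other.
Qed.

End Transfer.

Section CompleteGraphDynamics.

Variable n : nat.
Implicit Types (m a b c j t r : nat) (s : nat -> nat) (P : {set {set 'I_n}}).

Definition reachable m P :=
  exists f, IS_sequence_from_singletons (complete_graph 'I_n) m f /\ f m = P.

Lemma reachable0 : reachable 0 (singleton_partition 'I_n).
Proof. by exists (fun=> singleton_partition 'I_n). Qed.

Lemma reachableS m P P' :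
  reachable m P -> IS_step (complete_graph 'I_n) P P' -> reachable m.+1 P'.
Proof.
move=> [f [[f0 steps] fm]] step; exists (fun k => if k <= m then f k else P').
split; last by rewrite ltnn.
split=> // k; rewrite ltnS => km; rewrite km.
case: (ltnP k m) => [lt_km|le_mk]; first exact: steps.
have -> : k = m by apply/eqP; rewrite eqn_leq km le_mk.
by rewrite fm.
Qed.

Definition sizes_reachable m s :=
  exists2 g : 'I_n -> nat, reachable m (level_partition g) & forall c, #|level g c| = s c.

Lemma sizes_reachable_eq m s s' : s =1 s' -> sizes_reachable m s -> sizes_reachable m s'.
Proof. by move=> ss' [g reach sizes]; exists g => // c; rewrite sizes. Qed.

Lemma sizes_reachable0 : sizes_reachable 0 (fun c => c < n).
Proof.
have val_inj : injective (@nat_of_ord n) by exact: val_inj.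
exists (@nat_of_ord n) => [|c]; first by rewrite level_partition_inj //; exact: reachable0.
case: (ltnP c n) => [cn|nc].
  by rewrite (_ : c = Ordinal cn) // level_inj // cards1.
by apply: eq_card0 => x; rewrite in_level; apply: contraTF nc => /eqP <-; rewrite -ltnNge.
Qed.

Lemma sizes_reachable_transfer m s a b : a != b -> 0 < s a <= s b ->
  sizes_reachable m s -> sizes_reachable m.+1 (transfer s a b 1).
Proof.
move=> ab /andP[sa_gt0 sab] [g reach sizes].
have [i gi] : exists i, g i = a.
  by move: sa_gt0; rewrite -sizes => /card_gt0P[i]; rewrite in_level => /eqP; exists i.
subst a; exists (relabel g i b) => [|c].
  apply: reachableS reach _; exists i, (level g b); rewrite move_level_partition 1?eq_sym //.
  by split=> //; apply: IS_deviation_complete; rewrite 1?eq_sym ?sizes.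
rewrite level_relabel; case: (eqVneq c b) => [->|cb].
  by rewrite transfer_dst // cardsU1 in_level (negbTE ab) sizes addnC.
have := cardsD1 i (level g c); rewrite in_level sizes.
case: (eqVneq c (g i)) => [->|ci] /=; first by rewrite transfer_src; lia.
by rewrite transfer_other //; lia.
Qed.

Lemma sizes_reachable_cascade m s j t : j < t -> 0 < s j <= s j.+1 ->
  (forall l, j < l < t -> s l < s l.+1) ->
  sizes_reachable m s -> sizes_reachable (m + (t - j)) (transfer s j t 1).
Proof.
move=> jt; rewrite -(subnKC jt); move: (t - j.+1) => d {t jt}.
elim: d j m s => [|d IH] j m s.
  by rewrite addn0 subSnn addn1 => sj _; apply: sizes_reachable_transfer; rewrite ?ltn_eqF.
move=> /andP[sj_gt0 sj] incr reach; rewrite -addSnnS.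
apply: (sizes_reachable_eq (transfer_chain (b := j.+1) _ _ _ _)); try lia.
rewrite (_ : m + _ = m.+1 + (j.+2 + d - j.+1)); last by lia.
apply: IH; last by apply: sizes_reachable_transfer; rewrite ?sj_gt0 ?ltn_eqF.
  rewrite transfer_dst ?transfer_other; try lia.
  by rewrite addn1 incr //; lia.
move=> l /andP[jl lt]; rewrite !transfer_other; try lia.
by apply: incr; lia.
Qed.

Lemma sizes_reachable_cascades m s j t r : j < t -> r <= s j <= s j.+1 ->
  (forall l, j < l < t -> s l < s l.+1) ->
  sizes_reachable m s -> sizes_reachable (m + r * (t - j)) (transfer s j t r).
Proof.
move=> jt /andP[r_le sj] incr reach; have jNt : j != t by lia.
elim: r r_le => [|r IH] r_le.
  rewrite mul0n addn0; apply: sizes_reachable_eq reach => x.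
  by rewrite /transfer subn0 addn0 !if_same.
rewrite mulSnr addnA -addn1; apply: (sizes_reachable_eq (transfer_add _ _ _ jNt)).
apply: sizes_reachable_cascade (IH (ltnW r_le)) => //.
  rewrite transfer_src subn_gt0 r_le /=.
  by apply: leq_trans (leq_subr _ _) (leq_trans sj (transfer_ge _ _ _ _)); lia.
move=> l /andP[jl lt]; rewrite transfer_other; try lia.
by apply: leq_trans (incr l _) (transfer_ge _ _ _ _); lia.
Qed.

Definition staircase k j s := (forall x, j <= x < k -> s x = x.+1) /\ k < s k.

Lemma staircase_incr k j s : staircase k j s -> forall l, j <= l < k -> s l < s l.+1.
Proof.
move=> [stair top] l /andP[jl lk]; rewrite stair ?jl //.
by case: (ltnP l.+1 k) => [l1k|kl1]; [rewrite stair //; lia | have -> : l.+1 = k by lia].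
Qed.

Lemma staircase_transfer k j s : j < k -> staircase k j s ->
  staircase k j.+1 (transfer s j k j.+1).
Proof.
move=> jk [stair top]; split => [x /andP[jx xk]|].
  by rewrite transfer_other ?stair //; lia.
by rewrite transfer_dst; lia.
Qed.

Lemma sizes_reachable_staircase m s k j : j <= k -> staircase k j s -> sizes_reachable m s ->
  exists s', sizes_reachable (m + \sum_(j <= x < k) x.+1 * (k - x)) s'.
Proof.
move Ed : (k - j) => d; elim: d j m s Ed => [|d IH] j m s Ed jk stair reach.
  by exists s; rewrite big_geq ?addn0 //; lia.
have jk' : j < k by lia.
have incr := staircase_incr stair.
have sj1 : s j < s j.+1 by apply: incr; lia.
have sj : j.+1 <= s j <= s j.+1 by rewrite (ltnW sj1) andbT (stair.1 j) //; lia.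
have reach' : sizes_reachable (m + j.+1 * (k - j)) (transfer s j k j.+1).
  by apply: sizes_reachable_cascades jk' sj _ reach => l lk; apply: incr; lia.
have Ed' : k - j.+1 = d by lia.
have [s' reach''] := IH _ _ _ Ed' jk' (staircase_transfer jk' stair) reach'.
by exists s'; rewrite big_ltn // addnA.
Qed.

Lemma sizes_reachable_gather m s c p r : c < p -> 0 < s c ->
  (forall i, i < r -> s (p + i) = 1) -> sizes_reachable m s ->
  exists s', [/\ sizes_reachable (m + r) s', s' c = s c + r
               & forall x, x != c -> x < p \/ p + r <= x -> s' x = s x].
Proof.
elim: r p m s => [|r IH] p m s cp sc pool reach; first by exists s; rewrite !addn0.
have sp : s p = 1 by rewrite -(addn0 p) pool.
have reach1 : sizes_reachable m.+1 (transfer s p c 1).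
  by apply: sizes_reachable_transfer reach; rewrite ?sp; lia.
have sc1 : 0 < transfer s p c 1 c by rewrite transfer_dst; lia.
have pool1 i : i < r -> transfer s p c 1 (p.+1 + i) = 1.
  by move=> ir; rewrite transfer_other ?addSnnS ?pool; lia.
have [|s' [reach' s'c s'x]] := IH p.+1 _ _ _ sc1 pool1 reach1; first lia.
exists s'; split; first by rewrite -addSnnS.
  by rewrite s'c transfer_dst; lia.
by move=> x xc xpr; rewrite s'x ?transfer_other //; lia.
Qed.

End CompleteGraphDynamics.

(* Labels [0..k] carry the staircase; coalition [y] is grown from the pool of
   singletons labelled [k.+1 + y * k + i], [i < k]. *)
Lemma sizes_reachable_pools k c : c <= k.+1 -> exists m s,
  [/\ sizes_reachable (k.+1 * k.+1) m s,
      forall x, x < c -> s x = x.+1,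
      forall x, c <= x <= k -> s x = 1
    & forall y i, c <= y <= k -> i < k -> s (k.+1 + y * k + i) = 1].
Proof.
elim: c => [|c IH] ck.
  exists 0, (fun x => x < k.+1 * k.+1); split=> [||x /andP[_ xk]|y i /andP[_ yk] ik].
  - exact: sizes_reachable0.
  - by [].
  - by apply/eqP; rewrite eqb1; nia.
  - by apply/eqP; rewrite eqb1; nia.
have [m [s [reach s_lt s_mid s_pool]]] := IH (ltnW ck).
have [|||s' [reach' s'c s'x]] :=
  sizes_reachable_gather (c := c) (p := k.+1 + c * k) (r := c) _ _ _ reach.
- lia.
- by rewrite s_mid //; lia.
- by move=> i ic; apply: s_pool; lia.
have s_c : s c = 1 by apply: s_mid; rewrite leqnn.
exists (m + c), s'; split=> // [x xc|x /andP[cx xk]|y i /andP[cy yk] ik].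
- case: (eqVneq x c) => [->|xNc]; first by rewrite s'c s_c add1n.
  by rewrite s'x ?s_lt //; lia.
- by rewrite s'x ?s_mid ?(ltnW cx) //; lia.
- have : c.+1 * k <= y * k by apply: leq_mul.
  by move=> ck_yk; rewrite s'x ?s_pool ?(ltnW cy) //; lia.
Qed.

Lemma staircase_moves k : 6 * \sum_(0 <= x < k) x.+1 * (k - x) = k * k.+1 * k.+2.
Proof.
have triangle l : 2 * \sum_(0 <= x < l) x.+1 = l * l.+1.
  elim: l => [|l IH]; first by rewrite big_geq.
  by rewrite big_nat_recr //= mulnDr IH; lia.
elim: k => [|k IH]; first by rewrite big_geq.
rewrite big_nat_recr //= subSnn muln1.
rewrite (eq_big_nat _ _ (F2 := fun x => x.+1 * (k - x) + x.+1)) => [|x /andP[_ xk]].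
  by rewrite big_split /= !mulnDr IH; have := triangle k; nia.
by rewrite subSn ?mulnS 1?addnC //; lia.
Qed.

Lemma complete_graph_long_sequence k : exists m f,
  IS_sequence_from_singletons (complete_graph 'I_(k.+1 * k.+1)) m f /\
  k * k.+1 * k.+2 <= 6 * m.
Proof.
have [m [s [reach s_lt _ _]]] := sizes_reachable_pools (leqnn k.+1).
have stair : staircase k 0 s by split=> [x /andP[_ xk]|]; rewrite s_lt //; lia.
have [_ [g [f [seq _]] _]] := sizes_reachable_staircase (leq0n k) stair reach.
by exists (m + \sum_(0 <= x < k) x.+1 * (k - x)), f; rewrite mulnDr staircase_moves leq_addl.
Qed.

Lemma cube_le_sq k m : 0 < k -> k * k.+1 * k.+2 <= 6 * m -> (k.+1 * k.+1) ^ 3 <= 144 * m ^ 2.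
Proof.
move=> k_gt0 km; have : (k * k.+1 * k.+2) ^ 2 <= (6 * m) ^ 2 by rewrite leq_exp2r.
have : (k.+1 * k.+1) ^ 2 <= 2 * (k * k.+2) ^ 2 by nia.
nia.
Qed.

Theorem proposition5p4 :
  (* upper bound O(n^2), uniformly in n and the game *)
  (exists K : nat, forall (n : nat) (e : rel 'I_n),
      simple_symmetric_game e ->
      forall (m : nat) (f : nat -> {set {set 'I_n}}),
        IS_sequence_from_singletons e m f -> m <= K * n ^ 2)
  /\
  (* lower bound Omega(n sqrt n) for infinitely many n:
     m >= c n^(3/2) with c = 1/sqrt d, i.e. d * m^2 >= n^3 *)
  (exists d : nat, 0 < d /\
     forall N : nat, exists n : nat, N <= n /\
       exists e : rel 'I_n, simple_symmetric_game e /\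
         exists (m : nat) (f : nat -> {set {set 'I_n}}),
           IS_sequence_from_singletons e m f /\ n ^ 3 <= d * m ^ 2).
Proof.
split.
  exists 1 => n e game m f seq.
  by have := IS_sequence_from_singletons_length game seq; rewrite card_ord; lia.
exists 144; split=> // N; exists (N.+2 * N.+2); split; first by nia.
exists (complete_graph _); split; first exact: complete_graph_game.
have [m [f [seq moves]]] := complete_graph_long_sequence N.+1.
by exists m, f; split; last exact: cube_le_sq.
Qed.
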